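(* Let $J,K,L\ge 1$ be integers (with $K=0$ or $L=0$ also allowed, in which case the corresponding sums are absent), let $p,q,n_1,\dots,n_J$ be positive integers, $n=\sum_{j=1}^J n_j$, and let $\mathbf X_\cdot=[\mathbf X_1,\dots,\mathbf X_J]\in\mathbb R^{p\times n}$ and $\mathbf Y_\cdot=[\mathbf Y_1,\dots,\mathbf Y_J]\in\mathbb R^{q\times n}$ with $\mathbf X_j\in\mathbb R^{p\times n_j}$, $\mathbf Y_j\in\mathbb R^{q\times n_j}$. Let $\mathbf C_Y\in\{0,1\}^{J\times K}$ and $\mathbf C_S\in\{0,1\}^{J\times L}$, and for $k=1,\dots,K$ let $\mathbf Y_\cdot^{(k)}=[\mathbf Y_1^{(k)},\dots,\mathbf Y_J^{(k)}]$ where $\mathbf Y_j^{(k)}=\mathbf Y_j$ if $\mathbf C_Y[j,k]=1$ and $\mathbf Y_j^{(k)}=\mathbf 0_{q\times n_j}$ otherwise. For $l=1,\dots,L$ let $\mathcal S_l$ be the set of matrices $\mathbf S=[\mathbf S_1,\dots,\mathbf S_J]\in\mathbb R^{p\times n}$ (blocks $\mathbf S_j\in\mathbb R^{p\times n_j}$) with $\mathbf S_j=\mathbf 0$ whenever $\mathbf C_S[j,l]=0$. Let $\lambda_B^{(k)}>0$ and $\lambda_S^{(l)}>0$. Consider $$F(\{\mathbf B_k\},\{\mathbf S^{(l)}\})=\tfrac12\Big\|\mathbf X_\cdot-\sum_{k=1}^K\mathbf B_k\mathbf Y_\cdot^{(k)}-\sum_{l=1}^L\mathbf S^{(l)}\Big\|_F^2+\sum_{k=1}^K\lambda_B^{(k)}\|\mathbf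 B_k\|_*+\sum_{l=1}^L\lambda_S^{(l)}\|\mathbf S^{(l)}\|_*,$$ minimized over $\mathbf B_k\in\mathbb R^{p\times q}$ and $\mathbf S^{(l)}\in\mathcal S_l$, and, for integers $r_B\ge\min(p,q)$ and $r_S\ge\min(p,n)$, $$G=\tfrac12\Big\{\Big\|\mathbf X_\cdot-\sum_{k=1}^K\mathbf U_B^{(k)}\mathbf V_B^{(k)T}\mathbf Y_\cdot^{(k)}-\sum_{l=1}^L\mathbf U_S^{(l)}\mathbf V_S^{(l)T}\Big\|_F^2+\sum_{k=1}^K\lambda_B^{(k)}\big(\|\mathbf U_B^{(k)}\|_F^2+\|\mathbf V_B^{(k)}\|_F^2\big)+\sum_{l=1}^L\lambda_S^{(l)}\big(\|\mathbf U_S^{(l)}\|_F^2+\|\mathbf V_S^{(l)}\|_F^2\big)\Big\},$$ minimized over $\mathbf U_B^{(k)}\in\mathbb R^{p\times r_B}$, $\mathbf V_B^{(k)}\in\mathbb R^{q\times r_B}$, $\mathbf U_S^{(l)}\in\mathbb R^{p\times r_S}$, $\mathbf V_S^{(l)}\in\mathbb R^{n\times r_S}$ such that $\mathbf U_S^{(l)}\mathbf V_S^{(l)T}\in\mathcal S_l$. Then the two problems have the same minimal value, and the solutions coincide: $(\{\mathbf B_k\},\{\mathbf S^{(l)}\})$ minimizes $F$ if and only if there is a minimizer of $G$ with $\mathbf B_k=\mathbf U_B^{(k)}\mathbf V_B^{(k)T}$ for all $k$ and $\mathbf S^{(l)}=\mathbf U_S^{(l)}\mathbf V_S^{(l)T}$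 for all $l$.
   Context: $\|\cdot\|_*$ denotes the nuclear norm (sum of singular values) and $\|\cdot\|_F$ the Frobenius norm. The matrices $\mathbf C_Y,\mathbf C_S$ are fixed binary indicator matrices specifying on which cohorts each covariate-driven module $\mathbf B_k\mathbf Y_\cdot^{(k)}$ and each auxiliary module $\mathbf S^{(l)}$ is present. *)

From HB Require Import structures.
From mathcomp Require Import all_boot all_order all_algebra.
From mathcomp Require Import reals.
From Stdlib Require Import ClassicalEpsilon.
Set Implicit Arguments. Unset Strict Implicit. Unset Printing Implicit Defensive.
Import Order.TTheory GRing.Theory Num.Theory.
Local Open Scope ring_scope.

Definition frob2 (R : realType) (m n : nat) (A : 'M[R]_(m, n)) : R :=
  \sum_(i < m) \sum_(j < n) A i j ^+ 2.

Definition orthomx (R : realType) (m : nat) (U : 'M[R]_m) : Prop :=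
  U^T *m U = 1%:M.

Definition is_svd (R : realType) (m n : nat) (A : 'M[R]_(m, n))
  (U : 'M[R]_m) (D : 'M[R]_(m, n)) (V : 'M[R]_n) : Prop :=
  [/\ orthomx U, orthomx V,
      (forall (i : 'I_m) (j : 'I_n), (i : nat) <> j -> D i j = 0),
      (forall (i : 'I_m) (j : 'I_n), (i : nat) = j -> 0 <= D i j) &
      A = U *m D *m V^T].

Definition svd_diag (R : realType) (m n : nat) (A : 'M[R]_(m, n)) : 'M[R]_(m, n) :=
  epsilon (inhabits (0 : 'M[R]_(m, n)))
    (fun D => exists U V, is_svd A U D V).

Definition nucnorm (R : realType) (m n : nat) (A : 'M[R]_(m, n)) : R :=
  \sum_(i < m) \sum_(j < n) (if (i : nat) == j then svd_diag A i j else 0).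

Definition Ymask (R : realType) (J q : nat) (nj : 'I_J -> nat)
  (Y : forall j : 'I_J, 'M[R]_(q, nj j)) (c : 'I_J -> bool)
  : 'M[R]_(q, \sum_(j < J) nj j) :=
  \mxrow_(j < J) (if c j then Y j else 0).

Definition inS (R : realType) (J p : nat) (nj : 'I_J -> nat) (c : 'I_J -> bool)
  (S : 'M[R]_(p, \sum_(j < J) nj j)) : Prop :=
  forall j : 'I_J, c j = false -> submxrow S j = 0.

Definition Fobj (R : realType) (J K L p q : nat) (nj : 'I_J -> nat)
  (X : forall j : 'I_J, 'M[R]_(p, nj j)) (Y : forall j : 'I_J, 'M[R]_(q, nj j))
  (CY : 'I_J -> 'I_K -> bool) (lamB : 'I_K -> R) (lamS : 'I_L -> R)
  (B : 'I_K -> 'M[R]_(p, q)) (S : 'I_L -> 'M[R]_(p, \sum_(j < J) nj j)) : R :=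
  frob2 (\mxrow_(j < J) X j - \sum_(k < K) B k *m Ymask Y (fun j => CY j k)
         - \sum_(l < L) S l) / 2
  + \sum_(k < K) lamB k * nucnorm (B k)
  + \sum_(l < L) lamS l * nucnorm (S l).

Definition Gobj (R : realType) (J K L p q rB rS : nat) (nj : 'I_J -> nat)
  (X : forall j : 'I_J, 'M[R]_(p, nj j)) (Y : forall j : 'I_J, 'M[R]_(q, nj j))
  (CY : 'I_J -> 'I_K -> bool) (lamB : 'I_K -> R) (lamS : 'I_L -> R)
  (UB : 'I_K -> 'M[R]_(p, rB)) (VB : 'I_K -> 'M[R]_(q, rB))
  (US : 'I_L -> 'M[R]_(p, rS)) (VS : 'I_L -> 'M[R]_(\sum_(j < J) nj j, rS)) : R :=
  (frob2 (\mxrow_(j < J) X j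
          - \sum_(k < K) UB k *m (VB k)^T *m Ymask Y (fun j => CY j k)
          - \sum_(l < L) US l *m (VS l)^T)
   + \sum_(k < K) lamB k * (frob2 (UB k) + frob2 (VB k))
   + \sum_(l < L) lamS l * (frob2 (US l) + frob2 (VS l))) / 2.

(* The factored penalty (|U|_F^2 + |V|_F^2) / 2 dominates the nuclear norm of
   U V^T: if U V^T = P D Q^T is an SVD, then D = (P^T U) (Q^T V)^T and each
   diagonal entry of D is bounded by AM-GM.  The balanced factors P D^(1/2) and
   Q D^(1/2), which fit in r >= min(m, n) columns, attain the bound.  Hence
   G(U, V) = F(U V^T) + a nonnegative excess that vanishes on balanced factors,
   so F and G have the same infimum and their minimizers correspond, as soon as
   G has a minimizer; it has one, being continuous and coercive on the closed
   set of feasible factors.  SVDs are built by Householder deflation along an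
   eigenvector of A^T A, obtained from the complex spectral theorem. *)

From Pilot Require Import Defs.
From HB Require Import structures.
From mathcomp Require Import all_boot all_order all_algebra.
From mathcomp Require Import reals complex.
From mathcomp Require Import boolp classical_sets topology normedtype matrix_normedtype derive.
From mathcomp Require Import ring lra.
From Stdlib Require Import ClassicalEpsilon.
(* Gives [orthomx] of Defs precedence over its homonym in mathcomp's spectral.v. *)
Import Pilot.Defs.
Set Implicit Arguments. Unset Strict Implicit. Unset Printing Implicit Defensive.
Import Order.TTheory GRing.Theory Num.Theory.
Import numFieldTopology.Exports numFieldNormedType.Exports.
Local Open Scope ring_scope.

Lemma ler_sum_term (R : numDomainType) (I : finType) (F : I -> R) i :
  (forall j, 0 <= F j) -> F i <= \sum_j F j.
Proof. by move=> F_ge0; rewrite (bigD1 i) //= lerDl sumr_ge0. Qed.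

Section Frobenius.
Variable R : realType.

Lemma frob2E m n (A : 'M[R]_(m, n)) : frob2 A = \tr (A^T *m A).
Proof.
rewrite /frob2 /mxtrace exchange_big; apply: eq_bigr => j _; rewrite mxE.
by apply: eq_bigr => i _; rewrite !mxE expr2.
Qed.

Lemma frob2_row n (w : 'rV[R]_n) : w *m w^T = (frob2 w)%:M.
Proof. by rewrite [LHS]mx11_scalar frob2E -mxtrace_mulC /mxtrace big_ord1. Qed.

Lemma frob2_rowE n (w : 'rV[R]_n) : frob2 w = (w *m w^T) 0 0.
Proof. by rewrite frob2_row mxE eqxx mulr1n. Qed.

Lemma frob2_ge0 m n (A : 'M[R]_(m, n)) : 0 <= frob2 A.
Proof. by apply: sumr_ge0 => i _; apply: sumr_ge0 => j _; apply: sqr_ge0. Qed.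

Lemma frob20 m n : frob2 (0 : 'M[R]_(m, n)) = 0.
Proof. by apply: big1 => i _; apply: big1 => j _; rewrite mxE expr0n. Qed.

Lemma frob2_eq0 m n (A : 'M[R]_(m, n)) : frob2 A = 0 -> A = 0.
Proof.
move=> /eqP; rewrite psumr_eq0 => [/allP A0|i _]; last first.
  by apply: sumr_ge0 => j _; apply: sqr_ge0.
apply/matrixP => i j; have /= := A0 i (mem_index_enum _).
rewrite psumr_eq0 => [/allP/(_ j (mem_index_enum _))|]; last by move=> *; apply: sqr_ge0.
by rewrite /= sqrf_eq0 mxE => /eqP.
Qed.

Lemma frob2Z m n (c : R) (A : 'M[R]_(m, n)) : frob2 (c *: A) = c ^+ 2 * frob2 A.
Proof.
rewrite /frob2 mulr_sumr; apply: eq_bigr => i _; rewrite mulr_sumr.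
by apply: eq_bigr => j _; rewrite mxE exprMn.
Qed.

Lemma sqr_entry_le_frob2 m n (A : 'M[R]_(m, n)) i j : A i j ^+ 2 <= frob2 A.
Proof.
have row_ge0 i' : 0 <= \sum_(k < n) A i' k ^+ 2 by apply: sumr_ge0 => k _; apply: sqr_ge0.
apply: le_trans (ler_sum_term i row_ge0).
by apply: ler_sum_term => k; apply: sqr_ge0.
Qed.

Lemma orthomx_tr m (U : 'M[R]_m) : orthomx U -> orthomx (U^T).
Proof. by rewrite /orthomx trmxK => /mulmx1C. Qed.

Lemma orthomx1 m : orthomx (1%:M : 'M[R]_m).
Proof. by rewrite /orthomx trmx1 mulmx1. Qed.

Lemma orthomxM m (P Q : 'M[R]_m) : orthomx P -> orthomx Q -> orthomx (P *m Q).
Proof.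
rewrite /orthomx => oP oQ.
by rewrite trmx_mul mulmxA -(mulmxA Q^T) oP mulmx1 oQ.
Qed.

Lemma orthomx_lift0 m (P : 'M[R]_m) : orthomx P -> orthomx (lift0_mx P).
Proof.
rewrite /orthomx /lift0_mx tr_block_mx !trmx0 trmx1 mulmx_block => ->.
by rewrite !mulmx0 !mul0mx !mulmx1 !addr0 !add0r -scalar_mx_block.
Qed.

Lemma frob2_orthomxl m n (P : 'M[R]_m) (A : 'M[R]_(m, n)) :
  orthomx P -> frob2 (P *m A) = frob2 A.
Proof.
by move=> oP; rewrite !frob2E trmx_mul mulmxA -(mulmxA _ _ P) oP mulmx1.
Qed.

End Frobenius.

Section Householder.
Variable R : realType.

Definition erow0 {n} : 'rV[R]_n.+1 := delta_mx 0 0.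

Lemma mulmx_erow0 n k (A : 'M[R]_(n.+1, k)) : erow0 *m A = row 0 A.
Proof. by rewrite rowE. Qed.

Lemma mulmx_tr_erow0 n (u : 'rV[R]_n.+1) : u *m erow0^T = (u 0 0)%:M.
Proof.
by rewrite -[LHS]trmxK trmx_mul trmxK mulmx_erow0 [LHS]mx11_scalar !mxE.
Qed.

Lemma erow0_mulmx_tr n (u : 'rV[R]_n.+1) : erow0 *m u^T = (u 0 0)%:M.
Proof. by rewrite -[erow0]trmxK -trmx_mul mulmx_tr_erow0 tr_scalar_mx. Qed.

Definition householder n (u : 'rV[R]_n.+1) : 'M[R]_n.+1 :=
  let w := u - erow0 in
  if w == 0 then 1%:M else 1%:M - (2 / frob2 w) *: (w^T *m w).

Lemma householder_tr n (u : 'rV[R]_n.+1) : (householder u)^T = householder u.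
Proof.
rewrite /householder; case: ifP => _; first by rewrite trmx1.
by rewrite linearB /= trmx1 linearZ /= trmx_mul trmxK.
Qed.

Lemma householder_spec n (u : 'rV[R]_n.+1) : frob2 u = 1 ->
  householder u *m householder u = 1%:M /\ erow0 *m householder u = u.
Proof.
move=> u1; rewrite /householder; case: eqP => [/eqP|/eqP w_neq0].
  by rewrite subr_eq0 => /eqP ->; rewrite mul1mx mulmx1.
set w := u - erow0 in w_neq0 *; set s := frob2 w; set W := w^T *m w.
have s_neq0 : s != 0 by apply: contra w_neq0 => /eqP/frob2_eq0 ->.
have e0w : erow0 *m w^T = (u 0 0 - 1)%:M.
  by rewrite erow0_mulmx_tr !mxE eqxx.
have sE : s = 2 - 2 * u 0 0.
  have /matrixP/(_ 0 0) := frob2_row w.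
  rewrite {1}/w linearB /= mulmxBl !mulmxBr frob2_row u1.
  rewrite mulmx_tr_erow0 !erow0_mulmx_tr !mxE !mulr1n -/s => <-; ring.
have WW : W *m W = s *: W.
  by rewrite /W mulmxA -(mulmxA w^T) frob2_row mul_mx_scalar -scalemxAl.
split.
  rewrite mulmxBl !mulmxBr mulmx1 -!scalemxAl -!scalemxAr mul1mx WW !scalerA.
  have -> : 2 / s * (2 / s) * s = 2 / s + 2 / s by field.
  by rewrite scalerDl opprB mulmx1 addrK subrK.
rewrite mulmxBr mulmx1 -scalemxAr /W mulmxA e0w mul_scalar_mx scalerA.
have -> : 2 / s * (u 0 0 - 1) = -1.
  by rewrite sE in s_neq0 *; field; apply: contra s_neq0 => /eqP s0; apply/eqP; lra.
by rewrite scaleN1r opprK /w addrC subrK.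
Qed.

Lemma orthomx_householder n (u : 'rV[R]_n.+1) : frob2 u = 1 -> orthomx (householder u).
Proof. by move=> /householder_spec[uu _]; rewrite /orthomx householder_tr. Qed.

End Householder.

Arguments erow0 {R n}.

Section SymmetricEigen.
Variable R : realType.

Lemma symmetric_eigenpair_neq0 n (M : 'M[R]_n) : M^T = M -> M != 0 ->
  exists (l : R) (v : 'rV[R]_n), [/\ l != 0, v != 0 & v *m M = l *: v].
Proof.
move=> Msym M_neq0.
pose toC := real_complex R; pose MC : 'M[R[i]]_n := map_mx toC M.
have MCherm : MC \is hermsymmx.
  apply: realsym_hermsym.
    by apply/is_hermitianmxP; rewrite expr0 scale1r map_mx_id // /MC map_trmx Msym.
  by apply/mxOverP => i j; rewrite mxE; apply/complex_realP; exists (M i j).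
have MCE := orthomx_spectralP (hermitian_normalmx MCherm).
set P := spectralmx MC in MCE; set d := spectral_diag MC in MCE.
have P_unit : P \in unitmx by apply: spectral_unit.
have [i di_neq0] : exists i, d 0 i != 0.
  apply/existsP; apply: contraR M_neq0 => /existsPn d0.
  have {}d0 : d = 0 by apply/rowP => j; move: (d0 j); rewrite negbK mxE => /eqP.
  apply/eqP; apply: (@map_mx_inj _ _ toC).
  by rewrite map_mx0 -/MC MCE d0 raddf0 mulmx0 mul0mx.
have [lam dE] : exists lam, d 0 i = toC lam.
  have /mxOverP di_real := hermitian_spectral_diag_real MCherm.
  exact/complex_realP/di_real.
have detC : \det (MC - (d 0 i)%:M) = 0.
  apply/eqP/det0P; exists (row i P).
    apply/negP => /eqP Pi0; have := congr1 (row i) (mulmxV P_unit).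
    rewrite row_mul Pi0 mul0mx => /rowP /(_ i); rewrite !mxE eqxx /=.
    by move/eqP; rewrite eq_sym oner_eq0.
  rewrite mulmxBr -row_mul [in P *m MC]MCE !mulmxA mulmxV // mul1mx row_mul row_diag_mx.
  by rewrite -scalemxAl -rowE mul_mx_scalar subrr.
have /eqP/det0P [v v_neq0 vE] : \det (M - lam%:M) = 0.
  apply: (@complexI R); rewrite rmorph0 -det_map_mx map_mxB map_scalar_mx -/MC.
  by move: detC; rewrite dE.
exists lam, v; split => //; first by apply: contra di_neq0 => /eqP l0; rewrite dE l0.
by move/eqP: vE; rewrite mulmxBr mul_mx_scalar subr_eq0 => /eqP.
Qed.

End SymmetricEigen.

Section SVD.
Variable R : realType.

Lemma frob2_normalize n (x : 'rV[R]_n) :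
  x != 0 -> frob2 ((Num.sqrt (frob2 x))^-1 *: x) = 1.
Proof.
move=> x_neq0; have x2_gt0 : 0 < frob2 x.
  by rewrite lt_def frob2_ge0 andbT; apply: contra x_neq0 => /eqP/frob2_eq0 ->.
by rewrite frob2Z exprVn sqr_sqrtr ?mulVf ?gt_eqF // ltW.
Qed.

Lemma singular_pair_exists m n (A : 'M[R]_(m, n)) : A != 0 ->
  exists s (u : 'rV_m) (v : 'rV_n),
    [/\ 0 < s, frob2 u = 1, frob2 v = 1, u *m A = s *: v & A *m v^T = s *: u^T].
Proof.
move=> A_neq0; set M := A^T *m A.
have M_neq0 : M != 0.
  apply: contra A_neq0 => /eqP M0; apply/eqP/frob2_eq0.
  by rewrite frob2E -/M M0 mxtrace0.
have M_sym : M^T = M by rewrite /M trmx_mul trmxK.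
have [lam [x [lam_neq0 x_neq0 xM]]] := symmetric_eigenpair_neq0 M_sym M_neq0.
set v := (Num.sqrt (frob2 x))^-1 *: x; have v1 : frob2 v = 1 by apply: frob2_normalize.
have vM : v *m M = lam *: v by rewrite -scalemxAl xM !scalerA mulrC.
set y := v *m A^T.
have y2 : frob2 y = lam.
  rewrite frob2_rowE trmx_mul trmxK mulmxA -(mulmxA v) vM -scalemxAl mxE.
  by rewrite -frob2_rowE v1 mulr1.
have lam_gt0 : 0 < lam by rewrite lt_def lam_neq0 -y2 frob2_ge0.
have y_neq0 : y != 0 by apply: contraNneq lam_neq0 => y0; rewrite -y2 y0 frob20.
set s := Num.sqrt lam; have s_gt0 : 0 < s by rewrite sqrtr_gt0.
have u1 : frob2 (s^-1 *: y) = 1 by rewrite /s -y2 frob2_normalize.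
exists s, (s^-1 *: y), v; split => //.
  rewrite -scalemxAl -mulmxA -/M vM scalerA; congr (_ *: _).
  by rewrite -[lam](sqr_sqrtr (ltW lam_gt0)) -/s expr2 mulKf ?gt_eqF.
by rewrite [(_ *: y)^T]linearZ /= scalerA mulfV ?gt_eqF // scale1r /y trmx_mul trmxK.
Qed.

Lemma householder_deflate m n (A : 'M[R]_(m.+1, n.+1)) s u v :
  frob2 u = 1 -> frob2 v = 1 -> u *m A = s *: v -> A *m v^T = s *: u^T ->
  let B := householder u *m A *m householder v in
  erow0 *m B = s *: erow0 /\ B *m erow0^T = s *: erow0^T.
Proof.
move=> /householder_spec[PP eP] /householder_spec[QQ eQ] uA Av /=; split.
  by rewrite !mulmxA eP uA -scalemxAl -{1}eQ -mulmxA QQ mulmx1.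
rewrite -mulmxA -[_ *m _^T]trmxK trmx_mul trmxK householder_tr eQ -mulmxA Av.
have uT : u^T = householder u *m erow0^T by rewrite -householder_tr -trmx_mul eP.
by rewrite -scalemxAr uT mulmxA PP mul1mx.
Qed.

Lemma block_mx_row0_col0 m n s (B : 'M[R]_(1 + m, 1 + n)) :
  erow0 *m B = s *: erow0 -> B *m erow0^T = s *: erow0^T ->
  B = block_mx s%:M 0 0 (drsubmx B).
Proof.
rewrite mulmx_erow0 -[B *m _]trmxK trmx_mul trmxK mulmx_erow0 => /rowP row0 col0.
have {}col0 i : B i 0 = s * (i == 0)%:R.
  by move/matrixP: col0 => /(_ i 0); rewrite !mxE.
have {}row0 j : B 0 j = s * (j == 0)%:R by move: (row0 j); rewrite !mxE.
rewrite -{1}[B]submxK; congr block_mx; apply/matrixP => i j; rewrite !ord1 !mxE /=.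
- by rewrite (_ : lshift m 0 = 0) ?row0 ?mulr1 //; apply: val_inj.
- by rewrite (_ : lshift m 0 = 0) ?row0 ?mulr0 //; apply: val_inj.
- by rewrite (_ : lshift n 0 = 0) ?col0 ?mulr0 //; apply: val_inj.
Qed.

Lemma is_svd0 m n : is_svd (0 : 'M[R]_(m, n)) 1%:M 0 1%:M.
Proof.
by split; rewrite ?mulmx0 ?mul0mx //; try exact: orthomx1; move=> i j _; rewrite mxE.
Qed.

Lemma is_svd_block m n s (A : 'M[R]_(m, n)) P D Q : 0 <= s -> is_svd A P D Q ->
  is_svd (block_mx s%:M 0 0 A : 'M_(1 + m, 1 + n))
    (lift0_mx P) (block_mx s%:M 0 0 D) (lift0_mx Q).
Proof.
move=> s_ge0 [oP oQ D_diag D_ge0 ->]; split; try exact: orthomx_lift0.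
- move=> i j; case: (split_ordP i) => i' ->; case: (split_ordP j) => j' -> /=.
  + by rewrite !ord1.
  + by rewrite block_mxEur mxE.
  + by rewrite block_mxEdl mxE.
  + by rewrite block_mxEdr => ij; apply: D_diag => /= e; apply: ij; rewrite e.
- move=> i j; case: (split_ordP i) => i' ->; case: (split_ordP j) => j' -> /=.
  + by rewrite block_mxEul !ord1 mxE.
  + by rewrite block_mxEur mxE.
  + by rewrite block_mxEdl mxE.
  + by rewrite block_mxEdr => -[]; apply: D_ge0.
rewrite /lift0_mx tr_block_mx !trmx0 trmx1 !mulmx_block.
rewrite !mulmx0 !mul0mx !mulmx1 !addr0 !add0r.
by congr block_mx; [exact: (esym (mul1mx _)) | exact: (esym (mul0mx _ _))].
Qed.

Lemma is_svd_orthomx_mul m n (A : 'M[R]_(m, n)) P0 Q0 P D Q :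
  orthomx P0 -> orthomx Q0 -> is_svd A P D Q ->
  is_svd (P0 *m A *m Q0^T) (P0 *m P) D (Q0 *m Q).
Proof.
move=> oP0 oQ0 [oP oQ D_diag D_ge0 ->].
by split; [exact: orthomxM | exact: orthomxM | done | done | rewrite trmx_mul !mulmxA].
Qed.

Lemma svd_exists m n (A : 'M[R]_(m, n)) : exists P D Q, is_svd A P D Q.
Proof.
elim: n m A => [|n IH] m A.
  by exists 1%:M, 0, 1%:M; rewrite thinmx0; apply: is_svd0.
case: m A => [|m] A.
  by exists 1%:M, 0, 1%:M; rewrite flatmx0; apply: is_svd0.
have [->|A_neq0] := eqVneq A 0; first by exists 1%:M, 0, 1%:M; apply: is_svd0.
have [s [u [v [s_gt0 u1 v1 uA Av]]]] := singular_pair_exists A_neq0.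
have [row0 col0] := householder_deflate u1 v1 uA Av.
set B := _ *m _ *m _ in row0 col0.
have [P [D [Q svdA']]] := IH _ (drsubmx (B : 'M_(1 + m, 1 + n))).
exists (householder u *m lift0_mx P), (block_mx (s%:M : 'M_1) 0 0 D),
  (householder v *m lift0_mx Q).
have -> : A = householder u *m B *m (householder v)^T.
  have [[PP _] [QQ _]] := (householder_spec u1, householder_spec v1).
  by rewrite householder_tr /B !mulmxA PP mul1mx -mulmxA QQ mulmx1.
rewrite [in B in is_svd B](block_mx_row0_col0 row0 col0).
apply: is_svd_orthomx_mul; try exact: orthomx_householder.
exact: is_svd_block (ltW s_gt0) svdA'.
Qed.

End SVD.

Section DiagonalSum.
Variable R : realType.

Definition diag_sum m n (D : 'M[R]_(m, n)) : R :=
  \sum_(i < m) \sum_(j < n) (if (i : nat) == j then D i j else 0).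

Lemma sum_eq_nat_le n (i : nat) (x : R) :
  0 <= x -> \sum_(j < n) (if (j : nat) == i then x else 0) <= x.
Proof. by move=> x_ge0; rewrite -big_mkcond big_ord1_eq; case: ifP. Qed.

Lemma diag_sum_mul_le m n r (U : 'M[R]_(m, r)) (V : 'M[R]_(n, r)) :
  diag_sum (U *m V^T) <= (frob2 U + frob2 V) / 2.
Proof.
pose ru i := \sum_(k < r) U i k ^+ 2; pose rv j := \sum_(k < r) V j k ^+ 2.
have ru_ge0 i : 0 <= ru i by apply: sumr_ge0 => k _; apply: sqr_ge0.
have rv_ge0 j : 0 <= rv j by apply: sumr_ge0 => k _; apply: sqr_ge0.
have UV_le i j : (U *m V^T) i j <= (ru i + rv j) / 2.
  rewrite mxE -big_split mulr_suml; apply: ler_sum => k _ /=.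
  by rewrite mxE; have := sqr_ge0 (U i k - V j k); nra.
apply: (@le_trans _ _ ((\sum_(i < m) \sum_(j < n)
    ((if (i : nat) == j then ru i else 0) + (if (i : nat) == j then rv j else 0))) / 2)).
  rewrite mulr_suml; apply: ler_sum => i _; rewrite mulr_suml.
  by apply: ler_sum => j _; case: ifP => _ //; rewrite addr0 mul0r.
rewrite ler_pM2r ?invr_gt0 ?ltr0n //.
under eq_bigr do rewrite big_split /=; rewrite big_split /=.
apply: lerD.
  by apply: ler_sum => i _; under eq_bigr do rewrite eq_sym; exact: sum_eq_nat_le.
by rewrite exchange_big; apply: ler_sum => j _; exact: sum_eq_nat_le.
Qed.

Lemma diag_sum_svd_le m n r (A : 'M[R]_(m, n)) P D Q (U : 'M[R]_(m, r)) V :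
  is_svd A P D Q -> A = U *m V^T -> diag_sum D <= (frob2 U + frob2 V) / 2.
Proof.
move=> [oP oQ _ _ A_svd] A_UV.
have -> : D = (P^T *m U) *m (Q^T *m V)^T.
  rewrite trmx_mul trmxK mulmxA -(mulmxA _ U) -A_UV A_svd !mulmxA oP mul1mx.
  by rewrite -mulmxA oQ mulmx1.
rewrite -(frob2_orthomxl U (orthomx_tr oP)) -(frob2_orthomxl V (orthomx_tr oQ)).
exact: diag_sum_mul_le.
Qed.

(* The entry D t t, and 0 when t is not a diagonal index. *)
Definition diag_entry m n (D : 'M[R]_(m, n)) (t : nat) : R :=
  \sum_(i < m | (i : nat) == t) \sum_(j < n | (j : nat) == t) D i j.

Lemma diag_entryE m n (D : 'M[R]_(m, n)) (i : 'I_m) (j : 'I_n) :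
  (i : nat) = j -> diag_entry D i = D i j.
Proof.
move=> ij; rewrite /diag_entry (big_pred1 i) // (big_pred1 j) // => k.
by rewrite /= ij.
Qed.

Lemma diag_entry_out m n (D : 'M[R]_(m, n)) t :
  (minn m n <= t)%N -> diag_entry D t = 0.
Proof.
rewrite geq_min => /orP[mt|nt]; rewrite /diag_entry.
  by rewrite big_pred0 // => i; rewrite ltn_eqF // (leq_trans (ltn_ord i) mt).
apply: big1 => i _; rewrite big_pred0 // => j.
by rewrite ltn_eqF // (leq_trans (ltn_ord j) nt).
Qed.

Lemma diag_sum_entryl m n (D : 'M[R]_(m, n)) :
  diag_sum D = \sum_(i < m) diag_entry D i.
Proof.
apply: eq_bigr => i _; rewrite /diag_entry (big_pred1 i) // -big_mkcond.
by apply: eq_bigl => j; rewrite eq_sym.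
Qed.

Lemma diag_sum_entryr m n (D : 'M[R]_(m, n)) :
  diag_sum D = \sum_(j < n) diag_entry D j.
Proof.
rewrite /diag_sum exchange_big; apply: eq_bigr => j _.
rewrite /diag_entry -big_mkcond; apply: eq_bigr => i _.
by rewrite (big_pred1 j).
Qed.

Lemma diag_entry_ge0 m n (A : 'M[R]_(m, n)) P D Q t :
  is_svd A P D Q -> 0 <= diag_entry D t.
Proof.
case=> _ _ _ D_ge0 _; apply: sumr_ge0 => i /eqP it; apply: sumr_ge0 => j /eqP jt.
by apply: D_ge0; rewrite it jt.
Qed.

Lemma svd_diagE m n (A : 'M[R]_(m, n)) P D Q : is_svd A P D Q ->
  D = \matrix_(i, j) if (i : nat) == j then diag_entry D i else 0.
Proof.
case=> _ _ D_diag _ _; apply/matrixP => i j; rewrite mxE.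
by case: eqP => [/diag_entryE ->|/D_diag].
Qed.

Definition sqrt_diag m r (d : nat -> R) : 'M[R]_(m, r) :=
  \matrix_(i, k) if (i : nat) == k then Num.sqrt (d i) else 0.

Section SqrtDiag.
Variables (r : nat) (d : nat -> R).
Hypotheses (d_ge0 : forall t, 0 <= d t) (d_out : forall t, (r <= t)%N -> d t = 0).

Lemma sum_sqr_sqrt_diag (i : nat) :
  \sum_(k < r) (if i == k then Num.sqrt (d i) else 0) ^+ 2 = d i.
Proof.
rewrite (eq_bigr (fun k : 'I_r => if (k : nat) == i then d i else 0)) => [|k _].
  by rewrite -big_mkcond (big_ord1_eq _ (fun=> d i)); case: ltnP => // /d_out ->.
by rewrite eq_sym; case: eqP => _; rewrite ?sqr_sqrtr ?expr0n.
Qed.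

Lemma frob2_sqrt_diag m : frob2 (sqrt_diag m r d) = \sum_(i < m) d i.
Proof.
apply: eq_bigr => i _; rewrite -[RHS]sum_sqr_sqrt_diag.
by apply: eq_bigr => k _; rewrite mxE.
Qed.

Lemma sqrt_diag_mul m n :
  sqrt_diag m r d *m (sqrt_diag n r d)^T =
  \matrix_(i, j) if (i : nat) == j then d i else 0.
Proof.
apply/matrixP => i j; rewrite !mxE; case: eqP => [ij|ij].
  rewrite -[RHS]sum_sqr_sqrt_diag; apply: eq_bigr => k _.
  by rewrite !mxE -ij expr2.
apply: big1 => k _; rewrite !mxE.
case: eqP => [ik|_]; last by rewrite mul0r.
by case: eqP => [jk|_]; [case: ij; rewrite ik jk | rewrite mulr0].
Qed.

End SqrtDiag.

Lemma svd_balanced_factor m n r (A : 'M[R]_(m, n)) P D Q :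
  is_svd A P D Q -> (minn m n <= r)%N ->
  exists (U : 'M[R]_(m, r)) (V : 'M[R]_(n, r)),
    A = U *m V^T /\ (frob2 U + frob2 V) / 2 = diag_sum D.
Proof.
move=> svdA mnr; have [oP oQ _ _ A_svd] := svdA.
have d_ge0 t := diag_entry_ge0 t svdA.
have d_out t : (r <= t)%N -> diag_entry D t = 0.
  by move=> rt; apply: diag_entry_out; apply: leq_trans rt.
exists (P *m sqrt_diag m r (diag_entry D)), (Q *m sqrt_diag n r (diag_entry D)).
split.
  rewrite A_svd trmx_mul mulmxA -(mulmxA P (sqrt_diag _ _ _)) sqrt_diag_mul //.
  by rewrite -(svd_diagE svdA).
rewrite !frob2_orthomxl // !frob2_sqrt_diag // -diag_sum_entryl -diag_sum_entryr.
by field.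
Qed.

End DiagonalSum.

Section NuclearNorm.
Variable R : realType.

Lemma svd_diag_spec m n (A : 'M[R]_(m, n)) : exists P Q, is_svd A P (svd_diag A) Q.
Proof.
apply: (epsilon_spec (inhabits (0 : 'M[R]_(m, n))) (fun D => exists P Q, is_svd A P D Q)).
by have [P [D [Q svdA]]] := svd_exists A; exists D, P, Q.
Qed.

Lemma nucnorm_mul_le m n r (U : 'M[R]_(m, r)) (V : 'M[R]_(n, r)) :
  nucnorm (U *m V^T) <= (frob2 U + frob2 V) / 2.
Proof.
by have [P [Q svdUV]] := svd_diag_spec (U *m V^T); apply: diag_sum_svd_le svdUV _.
Qed.

Lemma nucnorm_balanced_factor m n r (A : 'M[R]_(m, n)) : (minn m n <= r)%N ->
  exists (U : 'M[R]_(m, r)) (V : 'M[R]_(n, r)),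
    A = U *m V^T /\ (frob2 U + frob2 V) / 2 = nucnorm A.
Proof. by have [P [Q svdA]] := svd_diag_spec A; apply: svd_balanced_factor svdA. Qed.

Definition factor_excess m n r (U : 'M[R]_(m, r)) (V : 'M[R]_(n, r)) : R :=
  (frob2 U + frob2 V) / 2 - nucnorm (U *m V^T).

Lemma factor_excess_ge0 m n r (U : 'M[R]_(m, r)) (V : 'M[R]_(n, r)) :
  0 <= factor_excess U V.
Proof. by rewrite subr_ge0 nucnorm_mul_le. Qed.

Lemma balanced_factor_family (I : Type) m n r (C : I -> 'M[R]_(m, n)) :
  (minn m n <= r)%N ->
  exists (U : I -> 'M[R]_(m, r)) (V : I -> 'M[R]_(n, r)),
    (forall i, C i = U i *m (V i)^T) /\ (forall i, factor_excess (U i) (V i) = 0).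
Proof.
move=> mnr; have /choice[UV UVP] : forall i, exists UV : 'M[R]_(m, r) * 'M[R]_(n, r),
    C i = UV.1 *m UV.2^T /\ (frob2 UV.1 + frob2 UV.2) / 2 = nucnorm (C i).
  by move=> i; have [U [V UVi]] := nucnorm_balanced_factor (C i) mnr; exists (U, V).
exists (fun i => (UV i).1), (fun i => (UV i).2); split => i; first by case: (UVP i).
by rewrite /factor_excess; case: (UVP i) => <- ->; rewrite subrr.
Qed.

End NuclearNorm.

Section EntrywiseContinuity.
Variables (R : realType) (T : topologicalType).

Definition continuous_mx m n (f : T -> 'M[R]_(m, n)) :=
  forall i j, continuous (fun t => f t i j).

Lemma continuous_sumr (I : Type) (r : seq I) (P : pred I) (F : I -> T -> R) :
  (forall i, continuous (F i)) -> continuous (fun t => \sum_(i <- r | P i) F i t).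
Proof.
by move=> cF; apply: (@continuous_big R I +%R 0 P (@add_continuous R)) => i _; exact: cF.
Qed.

Lemma continuous_add (f g : T -> R) :
  continuous f -> continuous g -> continuous (fun t => f t + g t).
Proof. by move=> cf cg t; apply: continuousD; [exact: cf | exact: cg]. Qed.

Lemma continuous_mul (f g : T -> R) :
  continuous f -> continuous g -> continuous (fun t => f t * g t).
Proof. by move=> cf cg t; apply: continuousM; [exact: cf | exact: cg]. Qed.

Lemma continuous_mx_cst m n (A : 'M[R]_(m, n)) : continuous_mx (fun=> A).
Proof. by move=> i j; exact: cst_continuous. Qed.

Lemma continuous_mxD m n (f g : T -> 'M[R]_(m, n)) :
  continuous_mx f -> continuous_mx g -> continuous_mx (fun t => f t + g t).
Proof.
by move=> cf cg i j; under eq_fun do rewrite mxE; apply: continuous_add.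
Qed.

Lemma continuous_mxN m n (f : T -> 'M[R]_(m, n)) :
  continuous_mx f -> continuous_mx (fun t => - f t).
Proof.
by move=> cf i j; under eq_fun do rewrite mxE; move=> t; apply: (continuousN (cf i j t)).
Qed.

Lemma continuous_mxM m n k (f : T -> 'M[R]_(m, n)) (g : T -> 'M[R]_(n, k)) :
  continuous_mx f -> continuous_mx g -> continuous_mx (fun t => f t *m g t).
Proof.
move=> cf cg i j; under eq_fun do rewrite mxE.
by apply: continuous_sumr => l; apply: continuous_mul.
Qed.

Lemma continuous_mx_tr m n (f : T -> 'M[R]_(m, n)) :
  continuous_mx f -> continuous_mx (fun t => (f t)^T).
Proof. by move=> cf i j; under eq_fun do rewrite mxE; exact: (cf j i). Qed.

Lemma continuous_mx_sum (I : Type) (r : seq I) (P : pred I) m n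
    (F : I -> T -> 'M[R]_(m, n)) :
  (forall i, continuous_mx (F i)) ->
  continuous_mx (fun t => \sum_(i <- r | P i) F i t).
Proof.
move=> cF a b; under eq_fun do rewrite summxE.
by apply: continuous_sumr => i; exact: (cF i a b).
Qed.

Lemma continuous_mx_submxrow J (nj : 'I_J -> nat) m
    (f : T -> 'M[R]_(m, \sum_(j < J) nj j)) j :
  continuous_mx f -> continuous_mx (fun t => submxrow (f t) j).
Proof. by move=> cf a b; under eq_fun do rewrite mxE; exact: cf. Qed.

Lemma continuous_frob2 m n (f : T -> 'M[R]_(m, n)) :
  continuous_mx f -> continuous (fun t => frob2 (f t)).
Proof.
by move=> cf; do 2 apply: continuous_sumr => ?; apply: continuous_mul.
Qed.

Local Open Scope classical_set_scope.

Lemma continuous_eq0_closure (A : set T) (e : T -> R) :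
  continuous e -> (forall t, A t -> e t = 0) -> forall t, closure A t -> e t = 0.
Proof.
move=> ce e0 t At; have /closure_id e0_closed : closed (e @^-1` [set 0]).
  by apply: preimage_closed; [move=> x _; exact: ce | exact: closed_eq].
have : closure (e @^-1` [set 0]) t by apply: closureS At => x /e0.
by rewrite -e0_closed.
Qed.

End EntrywiseContinuity.

Section CoerciveMinimum.
Variable R : realType.
Local Open Scope classical_set_scope.

Lemma coercive_EVT_min N (f : 'rV[R]_N -> R) (A : set 'rV[R]_N) (w : 'I_N -> R) a :
  continuous f -> closed A -> A a -> (forall t, 0 <= w t) ->
  (forall (v : 'rV[R]_N) t, v 0 t ^+ 2 <= w t * f v) ->
  exists2 v, A v & forall u, A u -> f v <= f u.
Proof.
move=> cf cA Aa w_ge0 coercive; pose c t := Num.sqrt (w t * f a).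
pose box := [set v : 'rV[R]_N | forall t, `[- c t, c t] (v 0 t)].
have box_compact : compact box :=
  rV_compact (fun t => @segment_compact R (- c t) (c t)).
have box_a : box a.
  move=> t; rewrite /= in_itv /= -ler_norml -sqrtr_sqr.
  by rewrite ler_wsqrtr // coercive.
have [v /set_mem[_ Av] vmin] := compact_EVT_min (ex_intro _ a (conj box_a Aa))
  (compact_closedI box_compact cA) (continuous_subspaceT cf).
(* A point u of A outside the box has a coordinate with
   w t * f a < u_t ^ 2 <= w t * f u, so f a < f u. *)
exists v => // u Au; case: (pselect (box u)) => [box_u|/existsNP[t]].
  by apply: vmin; apply: mem_set.
rewrite /= in_itv /= -ler_norml => /negP; rewrite -ltNge => cu.
have fva : f v <= f a by apply: vmin; apply: mem_set.
have wfa : w t * f a < u 0 t ^+ 2.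
  have c_ge0 : 0 <= c t := sqrtr_ge0 _.
  have wfa_le : w t * f a <= c t ^+ 2.
    have [|wfa_lt0] := leP 0 (w t * f a); first by move/sqr_sqrtr ->.
    by rewrite /c ltr0_sqrtr // expr0n ltW.
  rewrite -real_normK ?num_real //; apply: le_lt_trans wfa_le _.
  by have := normr_ge0 (u 0 t); nra.
by have := coercive u t; have := w_ge0 t; nra.
Qed.

End CoerciveMinimum.

Definition is_argmin (R : numDomainType) (T : Type) (C : T -> Prop) (h : T -> R) (t : T) :=
  C t /\ forall t', C t' -> h t <= h t'.

Section ArgminTransfer.
Variables (R : numDomainType) (T U : Type) (f : T -> R) (g : U -> R).
Variables (A : T -> Prop) (B : U -> Prop) (rep : U -> T -> Prop).
Hypotheses (f_le_g : forall x y, rep y x -> f x <= g y)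
  (lift : forall x, A x -> exists y, [/\ B y, rep y x & g y = f x])
  (rep_total : forall y, exists x, rep y x)
  (rep_feasible : forall x y, B y -> rep y x -> A x)
  (g_min : exists y, is_argmin B g y).

Lemma argmin_rep y x :
  is_argmin B g y -> rep y x -> is_argmin A f x /\ f x = g y.
Proof.
move=> [By ymin] yx; have Ax := rep_feasible By yx.
have [y' [By' _ gy']] := lift Ax.
split; last by apply/eqP; rewrite eq_le f_le_g // -gy' ymin.
split => // x' Ax'; have [y'' [By'' _ gy'']] := lift Ax'.
by rewrite -gy''; apply: le_trans (f_le_g yx) (ymin _ By'').
Qed.

Lemma argmin_lift x : is_argmin A f x <-> exists y, is_argmin B g y /\ rep y x.
Proof.
split=> [[Ax xmin]|[y [ymin yx]]]; last by case: (argmin_rep ymin yx).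
have [y0 y0min] := g_min; have [x0 y0x0] := rep_total y0.
have [[Ax0 _] fx0] := argmin_rep y0min y0x0.
have [y [By yx gy]] := lift Ax; exists y; split => //; split => // y' By'.
by rewrite gy; apply: le_trans (xmin _ Ax0) _; rewrite fx0; case: y0min => _; apply.
Qed.

Lemma argmin_exists : exists x y, [/\ is_argmin A f x, is_argmin B g y & f x = g y].
Proof.
have [y ymin] := g_min; have [x yx] := rep_total y.
by have [xmin fx] := argmin_rep ymin yx; exists x, y.
Qed.

End ArgminTransfer.

Section Objectives.
Variables (R : realType) (J K L p q rB rS : nat) (nj : 'I_J -> nat).
Variables (X : forall j : 'I_J, 'M[R]_(p, nj j)) (Y : forall j : 'I_J, 'M[R]_(q, nj j)).
Variables (CY : 'I_J -> 'I_K -> bool) (CS : 'I_J -> 'I_L -> bool).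
Variables (lamB : 'I_K -> R) (lamS : 'I_L -> R).
Hypotheses (lamB_gt0 : forall k, 0 < lamB k) (lamS_gt0 : forall l, 0 < lamS l).
Local Notation n := (\sum_(j < J) nj j).
Local Notation F := (Fobj X Y CY lamB lamS).
Local Notation G := (@Gobj R J K L p q rB rS nj X Y CY lamB lamS).

Lemma Gobj_FobjE UB VB US VS : G UB VB US VS =
  F (fun k => UB k *m (VB k)^T) (fun l => US l *m (VS l)^T)
  + \sum_(k < K) lamB k * factor_excess (UB k) (VB k)
  + \sum_(l < L) lamS l * factor_excess (US l) (VS l).
Proof.
have split_excess (I : finType) (lam a nuc : I -> R) :
    \sum_i lam i * (a i / 2 - nuc i) = (\sum_i lam i * a i) / 2 - \sum_i lam i * nuc i.
  by rewrite mulr_suml -sumrB; apply: eq_bigr => i _; ring.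
rewrite /Gobj /Fobj /factor_excess !split_excess; lra.
Qed.

Lemma Gobj_ge_penalty UB VB US VS :
  (forall k, lamB k * (frob2 (UB k) + frob2 (VB k)) <= 2 * G UB VB US VS) /\
  (forall l, lamS l * (frob2 (US l) + frob2 (VS l)) <= 2 * G UB VB US VS).
Proof.
have termB k : 0 <= lamB k * (frob2 (UB k) + frob2 (VB k)).
  by rewrite mulr_ge0 ?addr_ge0 ?frob2_ge0 ?ltW.
have termS l : 0 <= lamS l * (frob2 (US l) + frob2 (VS l)).
  by rewrite mulr_ge0 ?addr_ge0 ?frob2_ge0 ?ltW.
rewrite /Gobj; set res := frob2 _; have res0 : 0 <= res := frob2_ge0 _.
set sB := \sum_(k < K) _; set sS := \sum_(l < L) _.
have sB0 : 0 <= sB by apply: sumr_ge0 => k _.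
have sS0 : 0 <= sS by apply: sumr_ge0 => l _.
split => [k|l]; [have := ler_sum_term k termB | have := ler_sum_term l termS].
  rewrite -/sB; lra.
rewrite -/sS; lra.
Qed.

Lemma Fobj_le_Gobj UB VB US VS :
  F (fun k => UB k *m (VB k)^T) (fun l => US l *m (VS l)^T) <= G UB VB US VS.
Proof.
rewrite Gobj_FobjE -addrA lerDl.
apply: addr_ge0; apply: sumr_ge0 => i _.
  by rewrite mulr_ge0 ?factor_excess_ge0 // ltW.
by rewrite mulr_ge0 ?factor_excess_ge0 // ltW.
Qed.

Lemma Gobj_balanced_lift B S : (minn p q <= rB)%N -> (minn p n <= rS)%N ->
  exists UB VB US VS, [/\ forall k, B k = UB k *m (VB k)^T,
    forall l, S l = US l *m (VS l)^T & G UB VB US VS = F B S].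
Proof.
move=> rB_ge rS_ge; have [UB [VB [BE exB]]] := balanced_factor_family B rB_ge.
have [US [VS [SE exS]]] := balanced_factor_family S rS_ge.
exists UB, VB, US, VS; split => //; rewrite Gobj_FobjE.
have -> : \sum_(k < K) lamB k * factor_excess (UB k) (VB k) = 0.
  by apply: big1 => k _; rewrite exB mulr0.
have -> : \sum_(l < L) lamS l * factor_excess (US l) (VS l) = 0.
  by apply: big1 => l _; rewrite exS mulr0.
have -> : (fun k => UB k *m (VB k)^T) = B by apply: funext => k; rewrite BE.
have -> : (fun l => US l *m (VS l)^T) = S by apply: funext => l; rewrite SE.
by rewrite !addr0.
Qed.

(* The entries of all four factor families are the coordinates of one row
   vector, on which compactness of boxes is available. *)
Definition factor_index := ((('I_K * 'I_p * 'I_rB) + ('I_K * 'I_q * 'I_rB)) +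
  (('I_L * 'I_p * 'I_rS) + ('I_L * 'I_n * 'I_rS)))%type.
Local Notation N := #|{: factor_index}|.

Definition coord (v : 'rV[R]_N) (i : factor_index) := v 0 (enum_rank i).

Definition UB_of v k : 'M_(p, rB) := \matrix_(a, b) coord v (inl (inl (k, a, b))).
Definition VB_of v k : 'M_(q, rB) := \matrix_(a, b) coord v (inl (inr (k, a, b))).
Definition US_of v l : 'M_(p, rS) := \matrix_(a, b) coord v (inr (inl (l, a, b))).
Definition VS_of v l : 'M_(n, rS) := \matrix_(a, b) coord v (inr (inr (l, a, b))).

Definition rV_of (UB : 'I_K -> 'M[R]_(p, rB)) (VB : 'I_K -> 'M[R]_(q, rB))
    (US : 'I_L -> 'M[R]_(p, rS)) (VS : 'I_L -> 'M[R]_(n, rS)) : 'rV[R]_N :=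
  \row_t match enum_val t with
         | inl (inl (k, a, b)) => UB k a b
         | inl (inr (k, a, b)) => VB k a b
         | inr (inl (l, a, b)) => US l a b
         | inr (inr (l, a, b)) => VS l a b
         end.

Lemma rV_ofK UB VB US VS : let v := rV_of UB VB US VS in
  [/\ UB_of v = UB, VB_of v = VB, US_of v = US & VS_of v = VS].
Proof.
by split; apply: funext => k; apply/matrixP => a b; rewrite !mxE /coord mxE enum_rankK.
Qed.

Definition G_rV v := G (UB_of v) (VB_of v) (US_of v) (VS_of v).

Lemma continuous_coord m k (f : 'I_m -> 'I_k -> factor_index) :
  continuous_mx (fun v => \matrix_(a, b) coord v (f a b)).
Proof.
move=> a b; rewrite (_ : (fun v => _) = fun v => coord v (f a b)).
  exact: coord_continuous.
by apply: funext => v; rewrite [LHS]mxE.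
Qed.

Lemma continuous_G_rV : continuous G_rV.
Proof.
have cB k : continuous_mx (fun v => UB_of v k *m (VB_of v k)^T).
  by apply: continuous_mxM; [|apply: continuous_mx_tr]; exact: continuous_coord.
have cS l : continuous_mx (fun v => US_of v l *m (VS_of v l)^T).
  by apply: continuous_mxM; [|apply: continuous_mx_tr]; exact: continuous_coord.
apply: continuous_mul; last exact: cst_continuous.
apply: continuous_add; first apply: continuous_add.
- apply: continuous_frob2; apply: continuous_mxD; first apply: continuous_mxD.
  + exact: continuous_mx_cst.
  + apply: continuous_mxN; apply: continuous_mx_sum => k.
    by apply: continuous_mxM; [exact: cB | exact: continuous_mx_cst].
  + by apply: continuous_mxN; apply: continuous_mx_sum => l; exact: cS.
- apply: continuous_sumr => k; apply: continuous_mul; first exact: cst_continuous.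
  by apply: continuous_add; apply: continuous_frob2; exact: continuous_coord.
- apply: continuous_sumr => l; apply: continuous_mul; first exact: cst_continuous.
  by apply: continuous_add; apply: continuous_frob2; exact: continuous_coord.
Qed.

Definition feasible_factors (US : 'I_L -> 'M[R]_(p, rS)) (VS : 'I_L -> 'M[R]_(n, rS)) :=
  forall l, inS (fun j => CS j l) (US l *m (VS l)^T).

Lemma closed_feasible_factors :
  closed [set v | feasible_factors (US_of v) (VS_of v)]%classic.
Proof.
move=> v v_cl l j CSjl; apply/matrixP => a b; rewrite [RHS]mxE.
apply: (continuous_eq0_closure
  (e := fun w => submxrow (US_of w l *m (VS_of w l)^T) j a b) _ _ v_cl) => [|w w_feas].
  apply: continuous_mx_submxrow; apply: continuous_mxM; first exact: continuous_coord.
  by apply: continuous_mx_tr; exact: continuous_coord.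
by rewrite (w_feas l j CSjl) mxE.
Qed.

Definition factor_weight (i : factor_index) : R :=
  match i with
  | inl (inl (k, _, _)) | inl (inr (k, _, _)) => lamB k
  | inr (inl (l, _, _)) | inr (inr (l, _, _)) => lamS l
  end.

Lemma factor_weight_gt0 i : 0 < factor_weight i.
Proof.
by case: i => [[[[k a] b]|[[k a] b]]|[[[l a] b]|[[l a] b]]]; rewrite /= ?lamB_gt0 ?lamS_gt0.
Qed.

Lemma G_rV_coercive v i : factor_weight i * coord v i ^+ 2 <= 2 * G_rV v.
Proof.
have [penB penS] := Gobj_ge_penalty (UB_of v) (VB_of v) (US_of v) (VS_of v).
have le_penalty (lam x f1 f2 : R) : 0 < lam -> x ^+ 2 <= f1 -> 0 <= f2 ->
    lam * x ^+ 2 <= lam * (f1 + f2).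
  by move=> lam_gt0 x_le f2_ge0; rewrite ler_pM2l // (le_trans x_le) ?lerDl.
case: i => [[[[k a] b]|[[k a] b]]|[[[l a] b]|[[l a] b]]] /=.
- apply: le_trans (penB k); apply: le_penalty; rewrite ?frob2_ge0 //.
  by have := sqr_entry_le_frob2 (UB_of v k) a b; rewrite mxE.
- apply: le_trans (penB k); rewrite addrC; apply: le_penalty; rewrite ?frob2_ge0 //.
  by have := sqr_entry_le_frob2 (VB_of v k) a b; rewrite mxE.
- apply: le_trans (penS l); apply: le_penalty; rewrite ?frob2_ge0 //.
  by have := sqr_entry_le_frob2 (US_of v l) a b; rewrite mxE.
- apply: le_trans (penS l); rewrite addrC; apply: le_penalty; rewrite ?frob2_ge0 //.
  by have := sqr_entry_le_frob2 (VS_of v l) a b; rewrite mxE.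
Qed.

Lemma Gobj_min_exists : exists UB VB US VS, feasible_factors US VS /\
  forall UB' VB' US' VS', feasible_factors US' VS' -> G UB VB US VS <= G UB' VB' US' VS'.
Proof.
have feas0 : feasible_factors (US_of 0) (VS_of 0).
  move=> l j _; have -> : US_of 0 l = 0 by apply/matrixP => a b; rewrite !mxE /coord mxE.
  by rewrite mul0mx; apply/matrixP => a b; rewrite !mxE.
have [v v_feas v_min] : exists2 v, feasible_factors (US_of v) (VS_of v) &
    forall u, feasible_factors (US_of u) (VS_of u) -> G_rV v <= G_rV u.
  apply: (coercive_EVT_min (w := fun t => 2 / factor_weight (enum_val t)))
    continuous_G_rV closed_feasible_factors feas0 _ _ => [t|u t].
    by rewrite divr_ge0 // ltW // factor_weight_gt0.
  rewrite mulrAC ler_pdivlMr ?factor_weight_gt0 // mulrC.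
  by have := G_rV_coercive u (enum_val t); rewrite /coord enum_valK.
exists (UB_of v), (VB_of v), (US_of v), (VS_of v); split => // UB VB US VS feas.
have [eUB eVB eUS eVS] := rV_ofK UB VB US VS.
by have := v_min (rV_of UB VB US VS); rewrite /G_rV eUB eVB eUS eVS; apply.
Qed.

End Objectives.

Unset Implicit Arguments.

Theorem theorem1 (R : realType) (J K L p q : nat) (nj : 'I_J -> nat)
  (X : forall j : 'I_J, 'M[R]_(p, nj j)) (Y : forall j : 'I_J, 'M[R]_(q, nj j))
  (CY : 'I_J -> 'I_K -> bool) (CS : 'I_J -> 'I_L -> bool)
  (lamB : 'I_K -> R) (lamS : 'I_L -> R) (rB rS : nat) :
  (0 < J)%N -> (0 < p)%N -> (0 < q)%N -> (forall j, (0 < nj j)%N) ->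
  (forall k, 0 < lamB k) -> (forall l, 0 < lamS l) ->
  (minn p q <= rB)%N -> (minn p (\sum_(j < J) nj j) <= rS)%N ->
  let feasF := fun (S : 'I_L -> 'M[R]_(p, \sum_(j < J) nj j)) =>
    forall l, inS (fun j => CS j l) (S l) in
  let feasG := fun (US : 'I_L -> 'M[R]_(p, rS))
                   (VS : 'I_L -> 'M[R]_(\sum_(j < J) nj j, rS)) =>
    forall l, inS (fun j => CS j l) (US l *m (VS l)^T) in
  let F := Fobj X Y CY lamB lamS in
  let G := @Gobj R J K L p q rB rS nj X Y CY lamB lamS in
  let minF := fun B S => feasF S /\
    forall B' S', feasF S' -> F B S <= F B' S' in
  let minG := fun UB VB US VS => feasG US VS /\
    forall UB' VB' US' VS', feasG US' VS' ->
      G UB VB US VS <= G UB' VB' US' VS' in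
  (exists B S UB VB US VS,
     minF B S /\ minG UB VB US VS /\ F B S = G UB VB US VS) /\
  (forall B S, minF B S <->
     exists UB VB US VS, minG UB VB US VS /\
       (forall k, B k = UB k *m (VB k)^T) /\
       (forall l, S l = US l *m (VS l)^T)).
Proof.
move=> _ _ _ _ lamB_gt0 lamS_gt0 rB_ge rS_ge feasF feasG F G minF minG.
pose n := \sum_(j < J) nj j.
pose T := (('I_K -> 'M[R]_(p, q)) * ('I_L -> 'M[R]_(p, n)))%type.
pose U := ((('I_K -> 'M[R]_(p, rB)) * ('I_K -> 'M[R]_(q, rB))) *
           (('I_L -> 'M[R]_(p, rS)) * ('I_L -> 'M[R]_(n, rS))))%type.
pose f (x : T) := F x.1 x.2; pose feasT (x : T) := feasF x.2.
pose g (y : U) := G y.1.1 y.1.2 y.2.1 y.2.2; pose feasU (y : U) := feasG y.2.1 y.2.2.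
pose rep (y : U) (x : T) := (forall k, x.1 k = y.1.1 k *m (y.1.2 k)^T) /\
                (forall l, x.2 l = y.2.1 l *m (y.2.2 l)^T).
have f_le_g x y : rep y x -> f x <= g y.
  case: x y => [Bx Sx] [[UB VB] [US VS]] [/= /funext -> /funext ->].
  exact: Fobj_le_Gobj.
have lift x : feasT x -> exists y, [/\ feasU y, rep y x & g y = f x].
  case: x => [Bx Sx] feas; have [UB [VB [US [VS [BE SE GF]]]]] :=
    Gobj_balanced_lift X Y CY lamB lamS Bx Sx rB_ge rS_ge.
  by exists ((UB, VB), (US, VS)); split => // l; rewrite -SE; apply: feas.
have rep_total y : exists x, rep y x.
  by exists (fun k => y.1.1 k *m (y.1.2 k)^T, fun l => y.2.1 l *m (y.2.2 l)^T).
have rep_feasible x y : feasU y -> rep y x -> feasT x by move=> feas [_ SE] l; rewrite SE.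
have g_min : exists y, is_argmin feasU g y.
  have [UB [VB [US [VS [feas Gmin]]]]] := Gobj_min_exists rB rS X Y CY CS lamB_gt0 lamS_gt0.
  by exists ((UB, VB), (US, VS)); split => // -[[UB' VB'] [US' VS']]; apply: Gmin.
have minFE B S : minF B S <-> is_argmin feasT f (B, S).
  split=> -[feas Fmin]; split=> //; first by case=> B' S'; apply: Fmin.
  by move=> B' S'; apply: (Fmin (B', S')).
have minGE UB VB US VS : minG UB VB US VS <-> is_argmin feasU g ((UB, VB), (US, VS)).
  split=> -[feas Gmin]; split=> //; first by case=> -[UB' VB'] [US' VS']; apply: Gmin.
  by move=> UB' VB' US' VS'; apply: (Gmin ((UB', VB'), (US', VS'))).
split.
  have [[Bx Sx] [[[UB VB] [US VS]] [xmin ymin fg]]] :=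
    argmin_exists f_le_g lift rep_total rep_feasible g_min.
  by exists Bx, Sx, UB, VB, US, VS; rewrite minFE minGE.
move=> Bx Sx; rewrite minFE (argmin_lift f_le_g lift rep_total rep_feasible g_min).
split=> [[[[UB VB] [US VS]] [ymin [BE SE]]]|[UB [VB [US [VS [ymin [BE SE]]]]]]].
  by exists UB, VB, US, VS; rewrite minGE.
by exists ((UB, VB), (US, VS)); rewrite -minGE.
Qed.
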